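(* Let $q=2^n$, let $B$ be a $k$-subset of $\mathrm{GF}(q)$, and let $E$ be a subset of $\mathrm{GF}(q)$ such that $\hat f_B(\mu)=\hat f_E(\mu^d)$ for all $\mu\in\mathrm{GF}(q)$, where $\gcd(d,q-1)=1$. For pairwise distinct $u_1,u_2,u_3\in\mathrm{GF}(q)$ let $I_B(u_1,u_2,u_3)=|\{(x,y)\in\mathrm{GF}(q)^2: u_ix+y\in B \ (i=1,2,3)\}|$. Then \[I_B(u_1,u_2,u_3)=N_E\big((u_2+u_3)^d,(u_3+u_1)^d,(u_1+u_2)^d\big).\]
   Context: $\mathrm{Tr}$ is the absolute trace $\mathrm{GF}(2^n)\to\mathrm{GF}(2)$. For a subset $S\subseteq\mathrm{GF}(q)$, $f_S$ is its characteristic function as a Boolean function, and $\hat f(\mu)=\sum_{x\in\mathrm{GF}(2^n)}(-1)^{f(x)+\mathrm{Tr}(\mu x)}$ is the Walsh transform. For $S\subseteq\mathrm{GF}(q)$ and $a,b,c\in\mathrm{GF}(q)$, $N_S(a,b,c)$ is the number of triples $(x,y,z)\in S^3$ with $ax+by+cz=0$. *)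

From HB Require Import structures.
From mathcomp Require Import all_boot all_order all_algebra all_field.
Set Implicit Arguments. Unset Strict Implicit. Unset Printing Implicit Defensive.
Import GRing.Theory.
Local Open Scope ring_scope.

(* Absolute trace GF(2^n) -> GF(2), realised inside F (values 0 or 1). *)
Definition absTr (F : finFieldType) (n : nat) (x : F) : F :=
  \sum_(i < n) x ^+ (2 ^ i).

Definition trsign (F : finFieldType) (n : nat) (x : F) : int :=
  if absTr n x == 0 then 1 else -1.

Definition charf (F : finFieldType) (S : {set F}) (x : F) : bool := x \in S.

Definition walsh (F : finFieldType) (n : nat) (f : F -> bool) (mu : F) : int :=
  \sum_(x : F) (-1) ^+ (f x) * trsign n (mu * x).

Definition NS (F : finFieldType) (S : {set F}) (a b c : F) : nat :=
  #|[set t : F * F * F | [&& t.1.1 \in S, t.1.2 \in S, t.2 \in S &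
                          a * t.1.1 + b * t.1.2 + c * t.2 == 0]]|.

Definition IB (F : finFieldType) (B : {set F}) (u1 u2 u3 : F) : nat :=
  #|[set p : F * F | [&& u1 * p.1 + p.2 \in B, u2 * p.1 + p.2 \in B &
                       u3 * p.1 + p.2 \in B]]|.

From HB Require Import structures.
From mathcomp Require Import all_boot all_order all_algebra all_field zify ring.
Set Implicit Arguments. Unset Strict Implicit. Unset Printing Implicit Defensive.
Import GRing.Theory Num.Theory.
Local Open Scope ring_scope.

(* In characteristic 2, (x, y) |-> (u1 x + y, u2 x + y, u3 x + y) is a bijection
   from GF(q)^2 onto the solutions of (u2 + u3) b1 + (u3 + u1) b2 + (u1 + u2) b3 = 0,
   so I_B(u1, u2, u3) = N_B(u2 + u3, u3 + u1, u1 + u2).  Expanding the indicator of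
   that equation with the additive character (-1)^Tr gives
   q N_S(a, b, c) = sum_mu S^(mu a) S^(mu b) S^(mu c), where S^(nu) is the
   character sum of S at nu, which the Walsh transform of f_S determines.  The
   hypothesis says B^(mu) = E^(mu^d), and mu |-> mu^d permutes GF(q). *)

Section LinesInCharacteristicTwo.

Variables (F : fieldType) (u1 u2 u3 : F).
Hypotheses (F2 : 2 \in [pchar F]) (u12 : u1 != u2).

Definition line_points (p : F * F) : F * F * F :=
  (u1 * p.1 + p.2, u2 * p.1 + p.2, u3 * p.1 + p.2).

Lemma line_points_inj : injective line_points.
Proof.
move=> [x y] [x' y'] [/= e1 e2 _].
have : (u1 - u2) * (x - x') == 0.
  apply/eqP; transitivity (u1 * x + y - (u2 * x + y) - (u1 * x' + y' - (u2 * x' + y'))).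
    by ring.
  by rewrite e1 e2 subrr.
rewrite mulf_eq0 !subr_eq0 (negbTE u12) => /eqP ex.
by move: e1; rewrite ex => /addrI ->.
Qed.

Lemma line_pointsP b :
  reflect (exists p, line_points p = b)
          ((u2 + u3) * b.1.1 + (u3 + u1) * b.1.2 + (u1 + u2) * b.2 == 0).
Proof.
have two0 : 2%:R = 0 :> F := pcharf0 F2.
apply: (iffP eqP) => [rel | [[x y] <-] /=]; last first.
  transitivity (2%:R * ((u1 * u2 + u2 * u3 + u3 * u1) * x + (u1 + u2 + u3) * y)).
    by ring.
  by rewrite two0 mul0r.
case: b rel => [[b1 b2] b3] /= rel.
have u12' : u1 - u2 != 0 by rewrite subr_eq0.
pose x := (b1 - b2) / (u1 - u2).
have hx : (u1 - u2) * x = b1 - b2 by rewrite mulrC divfK.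
exists (x, b1 - u1 * x); rewrite /line_points /=; congr (_, _, _).
- by ring.
- by transitivity (b1 - (u1 - u2) * x); [ring | rewrite hx; ring].
apply: (mulfI u12').
transitivity ((u3 - u1) * ((u1 - u2) * x) + (u1 - u2) * b1); first by ring.
rewrite hx; apply/eqP; rewrite -subr_eq0; apply/eqP.
transitivity ((u2 + u3) * b1 + (u3 + u1) * b2 + (u1 + u2) * b3
              - 2%:R * (u3 * b2 + u1 * b3 + u2 * b1)); first by ring.
by rewrite rel two0 mul0r subrr.
Qed.

End LinesInCharacteristicTwo.

Lemma IB_NS_pchar2 (F : finFieldType) (B : {set F}) (u1 u2 u3 : F) :
  2 \in [pchar F] -> u1 != u2 -> IB B u1 u2 u3 = NS B (u2 + u3) (u3 + u1) (u1 + u2).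
Proof.
move=> F2 u12; rewrite /IB /NS -(card_imset _ (line_points_inj (u3 := u3) u12)).
apply: eq_card => b; rewrite inE.
apply/imsetP/and4P => [[p] | [b1B b2B b3B /(line_pointsP u3 F2 u12)[p pb]]].
  by rewrite inE => /and3P[? ? ?] ->; split=> //; apply/line_pointsP => //; exists p.
by exists p; rewrite // inE -pb in b1B b2B b3B *; rewrite b1B b2B b3B.
Qed.

Section Trace.

Variables (F : finFieldType) (n : nat).
Hypothesis cardF : #|F| = (2 ^ n)%N.

Lemma pchar2 : 2 \in [pchar F].
Proof. exact: card_finPcharP cardF _. Qed.

Lemma degree_gt0 : (0 < n)%N.
Proof. by have := finNzRing_gt1 F; rewrite cardF; case: n. Qed.

Lemma absTrD (x y : F) : absTr n (x + y) = absTr n x + absTr n y.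
Proof.
rewrite /absTr -big_split; apply: eq_bigr => i _ /=.
by rewrite exprDn_pchar // pnatX pnatE // pchar2.
Qed.

Lemma absTr_idem (x : F) : absTr n x ^+ 2 = absTr n x.
Proof.
have -> : absTr n x ^+ 2 = pFrobenius_aut pchar2 (absTr n x) by [].
rewrite /absTr rmorph_sum /=.
under eq_bigr do rewrite pFrobenius_autE -exprM -expnSr.
case: n cardF degree_gt0 => // m cardFm _.
rewrite big_ord_recr big_ord_recl /= -cardFm expf_card expn0 expr1 addrC.
by congr (_ + _); apply: eq_bigr.
Qed.

Lemma absTr01 (x : F) : (absTr n x == 0) || (absTr n x == 1).
Proof.
have : absTr n x * (absTr n x - 1) == 0 by rewrite mulrBr mulr1 -expr2 absTr_idem subrr.
by rewrite mulf_eq0 subr_eq0.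
Qed.

Lemma exists_absTr_neq0 : exists t : F, absTr n t != 0.
Proof.
have [t | trace0] := pickP (fun t : F => absTr n t != 0); first by exists t.
case: n cardF degree_gt0 trace0 => // m cardFm _ trace0.
pose p : {poly F} := \sum_(i < m.+1) 'X^(2 ^ i).
have size_p : size p = (2 ^ m).+1.
  rewrite /p big_ord_recr /= addrC size_polyDl size_polyXn //.
  apply: leq_ltn_trans (size_sum _ _ _) _; rewrite ltnS.
  apply/bigmax_leqP => i _; rewrite size_polyXn ltn_exp2l //.
have : all (root p) (enum F).
  apply/allP => x _; apply/eqP; move/negbFE/eqP: (trace0 x) <-.
  by rewrite horner_sum; apply: eq_bigr => i _; rewrite hornerXn.
have p_neq0 : p != 0 by rewrite -size_poly_eq0 size_p.
move/(max_poly_roots p_neq0)/(_ (enum_uniq F)).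
by rewrite -cardE cardFm size_p ltnS leqNgt ltn_exp2l // ltnSn.
Qed.

Lemma trsign0 : trsign n (0 : F) = 1.
Proof. by rewrite /trsign /absTr big1 ?eqxx // => i _; rewrite expr0n expn_eq0. Qed.

Lemma trsignD (x y : F) : trsign n (x + y) = trsign n x * trsign n y.
Proof.
have one_add_one : 1 + 1 = 0 :> F by rewrite -mulr2n pcharf0 // pchar2.
rewrite /trsign absTrD.
by case/orP: (absTr01 x) => /eqP->; case/orP: (absTr01 y) => /eqP->;
  rewrite ?addr0 ?add0r ?one_add_one ?eqxx ?oner_eq0.
Qed.

Lemma sum_trsign_mul (w : F) :
  \sum_(mu : F) trsign n (mu * w) = if w == 0 then #|F|%:R else 0.
Proof.
have [-> | w0] := eqVneq w 0.
  by under eq_bigr do rewrite mulr0 trsign0; rewrite sumr_const.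
have -> : \sum_(mu : F) trsign n (mu * w) = \sum_(x : F) trsign n x.
  by rewrite [RHS](reindex_inj (mulIf w0)).
have [t tr_t] := exists_absTr_neq0; set S := \sum_x _.
have : S = - S.
  rewrite {1}/S (reindex_inj (addIr t)) /= -sumrN.
  by apply: eq_bigr => x _; rewrite trsignD /trsign (negbTE tr_t) mulrN1.
lia.
Qed.

Definition charsum (S : {set F}) (nu : F) : int := \sum_(x in S) trsign n (nu * x).

Lemma walsh_charfE (S : {set F}) (mu : F) :
  walsh n (charf S) mu = (if mu == 0 then #|F|%:R else 0) - 2 * charsum S mu.
Proof.
rewrite /walsh /charsum -sum_trsign_mul mulr_sumr [\sum_(i in S) _]big_mkcond -sumrB.
apply: eq_bigr => x _; rewrite /charf [x * mu]mulrC.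
by case: (x \in S); rewrite /= ?expr0 ?expr1; ring.
Qed.

Lemma charsum_mul3 (S : {set F}) (a b c : F) :
  charsum S a * charsum S b * charsum S c =
  \sum_(t | [&& t.1.1 \in S, t.1.2 \in S & t.2 \in S])
    trsign n (a * t.1.1 + b * t.1.2 + c * t.2).
Proof.
rewrite /charsum big_distrlr pair_big_dep big_distrlr pair_big_dep /=.
by apply: eq_big => [t | t _]; rewrite ?andbA // !trsignD.
Qed.

Lemma NS_fourier (S : {set F}) (a b c : F) :
  (NS S a b c)%:R * #|F|%:R =
  \sum_mu charsum S (mu * a) * charsum S (mu * b) * charsum S (mu * c).
Proof.
under eq_bigr do rewrite charsum_mul3.
rewrite exchange_big /=.
under eq_bigr => t _ do under eq_bigr => mu _ do rewrite -!mulrA -!mulrDr.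
under eq_bigr do rewrite sum_trsign_mul.
rewrite -big_mkcondr /NS -sum1_card natr_sum mulr_suml.
by apply: eq_big => [t | t _]; rewrite ?inE ?mul1r // !andbA.
Qed.

End Trace.

Lemma expf_mul_card_pred1 (F : finFieldType) (x : F) (k : nat) :
  x ^+ (k * #|F|.-1).+1 = x.
Proof.
elim: k => [|k IHk]; first by rewrite expr1.
rewrite mulSn addnC -addSn exprD IHk -exprS prednK ?expf_card //.
exact: ltnW (finNzRing_gt1 F).
Qed.

Lemma expf_inj (F : finFieldType) (d : nat) :
  (0 < d)%N -> coprime d #|F|.-1 -> injective (fun x : F => x ^+ d).
Proof.
move=> d_gt0 /eqP coprime_d; have [u v uv _] := egcdnP #|F|.-1 d_gt0.
rewrite coprime_d addn1 in uv.
apply: (can_inj (g := fun x : F => x ^+ u)) => x /=.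
by rewrite -exprM mulnC uv expf_mul_card_pred1.
Qed.

Lemma NS_transfer_exp (F : finFieldType) (n d : nat) (B E : {set F}) (a b c : F) :
  #|F| = (2 ^ n)%N -> injective (fun x : F => x ^+ d) ->
  (forall mu : F, charsum n B mu = charsum n E (mu ^+ d)) ->
  NS B a b c = NS E (a ^+ d) (b ^+ d) (c ^+ d).
Proof.
move=> cardF d_inj charsumBE.
have q_neq0 : (#|F|%:R : int) != 0.
  by rewrite pnatr_eq0 -lt0n (ltnW (finNzRing_gt1 F)).
apply/eqP; rewrite -(eqr_nat int) -(inj_eq (mulIf q_neq0)).
rewrite !(NS_fourier cardF); apply/eqP.
under eq_bigr do rewrite !charsumBE !exprMn.
by rewrite [RHS](reindex_inj d_inj).
Qed.

Theorem lemma6 (F : finFieldType) (n k d : nat) (B E : {set F})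
  (hq : #|F| = (2 ^ n)%N) (hB : #|B| = k)
  (hd : coprime d (2 ^ n).-1)
  (hW : forall mu : F, walsh n (charf B) mu = walsh n (charf E) (mu ^+ d))
  (u1 u2 u3 : F) (h12 : u1 != u2) (h13 : u1 != u3) (h23 : u2 != u3) :
  IB B u1 u2 u3 = NS E ((u2 + u3) ^+ d) ((u3 + u1) ^+ d) ((u1 + u2) ^+ d).
Proof.
have card_gt2 : (2 < #|F|)%N.
  have uniq_u : uniq [:: u1; u2; u3] by rewrite /= !inE negb_or h12 h13 h23.
  by apply: leq_trans (max_card (mem [:: u1; u2; u3])); rewrite (card_uniqP uniq_u).
have d_gt0 : (0 < d)%N.
  by case: d hd {hW} => //; rewrite /coprime gcd0n -hq => /eqP; lia.
have charsumBE (mu : F) : charsum n B mu = charsum n E (mu ^+ d).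
  have two_neq0 : 2 != 0 :> int by [].
  have := hW mu; rewrite !(walsh_charfE hq) expf_eq0 d_gt0 /=.
  by move/addrI/oppr_inj/(mulfI two_neq0).
have d_inj : injective (fun x : F => x ^+ d) by apply: expf_inj; rewrite ?hq.
rewrite IB_NS_pchar2 ?(pchar2 hq) //; exact: NS_transfer_exp hq d_inj charsumBE.
Qed.
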